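(* For every $\alpha\in\Lambda$ and $x\in\mathbb R^3$, $$\nabla\mathscr W_\alpha(x)=(1-\xi_4)^{1/2}\Big(\mathscr V_\alpha(\xi)-\tfrac12\mathscr Y_\alpha(\xi)\hat\xi\Big),$$ where $\xi=(\xi_1,\xi_2,\xi_3,\xi_4)=\pi^{-1}(x)\in\mathbb S^3$, $\hat\xi=(\xi_1,\xi_2,\xi_3)$, $(\phi,\theta,\chi)$ are the spherical coordinates of $\xi$, and $$\mathscr V_\alpha(\xi)=(1-\cos\chi)\begin{pmatrix}-\sin\phi&\cos\phi\cos\theta&-\cos\phi\sin\theta\\ \cos\phi&\sin\phi\cos\theta&-\sin\phi\sin\theta\\ 0&-\sin\theta&-\cos\theta\end{pmatrix}\begin{pmatrix}\frac{1}{\sin\theta\sin\chi}\frac{\partial\mathscr Y_\alpha}{\partial\phi}(\xi)\\ \frac{1}{\sin\chi}\frac{\partial\mathscr Y_\alpha}{\partial\theta}(\xi)\\ \frac{\partial\mathscr Y_\alpha}{\partial\chi}(\xi)\end{pmatrix}.$$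
   Context: Points of $\mathbb S^3\subset\mathbb R^4$ are written in spherical coordinates $\xi=(\sin\theta\cos\phi\sin\chi,\sin\theta\sin\phi\sin\chi,\cos\theta\sin\chi,\cos\chi)$, $\phi\in[0,2\pi)$, $\theta,\chi\in[0,\pi]$; $\partial\mathscr Y_\alpha/\partial\phi$, $\partial\mathscr Y_\alpha/\partial\theta$, $\partial\mathscr Y_\alpha/\partial\chi$ denote the derivatives of $\mathscr Y_\alpha$ regarded as a function of $(\phi,\theta,\chi)$. $\pi^{-1}(x)=\big(\frac{2x_1}{|x|^2+1},\frac{2x_2}{|x|^2+1},\frac{2x_3}{|x|^2+1},\frac{|x|^2-1}{|x|^2+1}\big)$ is the inverse stereographic projection. Index set: $\Lambda=\{(k,\ell,m)\in\mathbb N^2\times\mathbb Z:0\le\ell\le k,\ -\ell\le m\le\ell\}$. $T_n$ is the Chebyshev polynomial of the first kind ($T_n(\cos t)=\cos(nt)$), $T_n^{(j)}$ its $j$-th derivative. $P_\ell^m(t)=\frac{(-1)^m}{2^\ell\ell!}(1-t^2)^{m/2}\frac{d^{\ell+m}}{dt^{\ell+m}}(t^2-1)^\ell$, $K_\ell^m=(-1)^m\sqrt{\frac{(\ell-m)!}{(\ell+m)!}}P_\ell^m$, $Y_{\ell,m}(\phi,\theta)=\sqrt{\frac{2\ell+1}{2\pi}}K_\ell^{|m|}(\cos\theta)y_m(\phi)$ with $y_m=\cos(m\phi)$ ($m\ge1$), $1/\sqrt2$ ($m=0$), $\sin(|m|\phi)$ ($m\le-1$). For $\alpha=(k,\ell,m)\in\Lambda$,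 $a_{k,\ell}=\frac{(k+1)\pi}{2}\frac{(k+\ell+1)!}{(k-\ell)!}$, $\mathscr Y_\alpha(\xi)=a_{k,\ell}^{-1/2}(\sin\chi)^\ell T^{(\ell+1)}_{k+1}(\cos\chi)Y_{\ell,m}(\phi,\theta)$, and $\mathscr W_\alpha(x)=\big(\frac{2}{|x|^2+1}\big)^{1/2}\mathscr Y_\alpha(\pi^{-1}(x))$. *)

From Stdlib Require Import Reals ZArith ClassicalEpsilon.
From Coquelicot Require Import Coquelicot.
Open Scope R_scope.

(* Chebyshev polynomial of the first kind, as a real function:
   T_0 = 1, T_1 = t, T_{n+2} = 2 t T_{n+1} - T_n  (so T_n(cos s) = cos(n s)). *)
Fixpoint cheb_pair (n : nat) (t : R) : R * R :=
  match n with
  | O => (1, t)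
  | S n' => let p := cheb_pair n' t in (snd p, 2 * t * snd p - fst p)
  end.
Definition chebT (n : nat) (t : R) : R := fst (cheb_pair n t).

Definition chebT_der (n j : nat) (t : R) : R := Derive_n (chebT n) j t.

Definition assocP (l m : nat) (t : R) : R :=
  (-1) ^ m / (2 ^ l * INR (fact l)) * (sqrt (1 - t ^ 2)) ^ m
  * Derive_n (fun s => (s ^ 2 - 1) ^ l) (l + m) t.

Definition legK (l m : nat) (t : R) : R :=
  (-1) ^ m * sqrt (INR (fact (l - m)) / INR (fact (l + m))) * assocP l m t.

Definition ym (m : Z) (phi : R) : R :=
  if (0 <? m)%Z then cos (IZR m * phi)
  else if (m =? 0)%Z then / sqrt 2
  else sin (IZR (Z.abs m) * phi).

Definition Ylm (l : nat) (m : Z) (phi theta : R) : R :=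
  sqrt ((2 * INR l + 1) / (2 * PI)) * legK l (Z.abs_nat m) (cos theta) * ym m phi.

Definition a_kl (k l : nat) : R :=
  (INR k + 1) * PI / 2 * (INR (fact (k + l + 1)) / INR (fact (k - l))).

(* scrY_alpha regarded as a function of the spherical coordinates (phi,theta,chi) *)
Definition Ysph (k l : nat) (m : Z) (phi theta chi : R) : R :=
  / sqrt (a_kl k l) * (sin chi) ^ l * chebT_der (k + 1) (l + 1) (cos chi)
  * Ylm l m phi theta.

Definition sph (phi theta chi : R) : R * R * R * R :=
  (sin theta * cos phi * sin chi, sin theta * sin phi * sin chi,
   cos theta * sin chi, cos chi).

Definition sph_range (phi theta chi : R) : Prop :=
  0 <= phi < 2 * PI /\ 0 <= theta <= PI /\ 0 <= chi <= PI.

Definition is_sph_coords (xi : R * R * R * R) (phi theta chi : R) : Prop :=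
  sph_range phi theta chi /\ sph phi theta chi = xi.

Definition sph_coords (xi : R * R * R * R) : R * R * R :=
  epsilon (inhabits (0, 0, 0))
    (fun c => let '(p, t, c') := c in is_sph_coords xi p t c').

Definition Yfun (k l : nat) (m : Z) (xi : R * R * R * R) : R :=
  let '(p, t, c) := sph_coords xi in Ysph k l m p t c.

Definition inv_stereo (x1 x2 x3 : R) : R * R * R * R :=
  let n2 := x1 ^ 2 + x2 ^ 2 + x3 ^ 2 in
  (2 * x1 / (n2 + 1), 2 * x2 / (n2 + 1), 2 * x3 / (n2 + 1), (n2 - 1) / (n2 + 1)).

Definition Wfun (k l : nat) (m : Z) (x1 x2 x3 : R) : R :=
  sqrt (2 / (x1 ^ 2 + x2 ^ 2 + x3 ^ 2 + 1)) * Yfun k l m (inv_stereo x1 x2 x3).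

Definition Vvec (k l : nat) (m : Z) (phi theta chi : R) : R * R * R :=
  let v1 := / (sin theta * sin chi) * Derive (fun p => Ysph k l m p theta chi) phi in
  let v2 := / sin chi * Derive (fun t => Ysph k l m phi t chi) theta in
  let v3 := Derive (fun c => Ysph k l m phi theta c) chi in
  let s := 1 - cos chi in
  (s * (- sin phi * v1 + cos phi * cos theta * v2 - cos phi * sin theta * v3),
   s * (cos phi * v1 + sin phi * cos theta * v2 - sin phi * sin theta * v3),
   s * (0 * v1 - sin theta * v2 - cos theta * v3)).

(* Since 2 / (|x|^2 + 1) = 1 - xi4, W = sqrt (1 - xi4) * (Y o pi^-1).  Along a line x + t e,
   pi^-1 moves with velocity (1 - xi4) e - (xi^ . e) xi^ in its first three coordinates and
   (1 - xi4) (xi^ . e) in the last, so the factor sqrt (1 - xi4) has derivative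
   -1/2 (xi^ . e) sqrt (1 - xi4).  Away from the axis xi1 = xi2 = 0 spherical coordinates are
   unique, so near xi the function Y is Ysph evaluated at smooth coordinate functions (an
   azimuth obtained from atan, cos theta = xi3 / sqrt (1 - xi4^2), chi = acos xi4); the chain
   rule along the stereographic velocity then produces V . e.  The factors of Ysph are smooth
   because Chebyshev polynomials and the derivatives of (s^2 - 1)^l are polynomials. *)

From Stdlib Require Import Reals ZArith Lra Lia ClassicalEpsilon.
From Coquelicot Require Import Coquelicot.
Open Scope R_scope.

Lemma is_derive_comp_R (f g : R -> R) (x df dg : R) :
  is_derive f (g x) df -> is_derive g x dg -> is_derive (fun t => f (g t)) x (df * dg).
Proof.
  intros Hf Hg; rewrite Rmult_comm; exact (is_derive_comp f g x df dg Hf Hg).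
Qed.

Lemma is_derive_value (f : R -> R) (x l l' : R) : is_derive f x l -> l = l' -> is_derive f x l'.
Proof. now intros H <-. Qed.

Lemma is_derive_scal_mult3 (f g h : R -> R) (c x df dg dh : R) :
  is_derive f x df -> is_derive g x dg -> is_derive h x dh ->
  is_derive (fun t => c * f t * g t * h t) x
    (c * df * g x * h x + c * f x * dg * h x + c * f x * g x * dh).
Proof.
  intros Hf Hg Hh.
  apply (is_derive_value _ _ ((c * df * g x + c * f x * dg) * h x + c * f x * g x * dh));
    [|ring].
  apply (Derive.is_derive_mult (fun t => c * f t * g t) h); [|exact Hh].
  apply (Derive.is_derive_mult (fun t => c * f t) g); [|exact Hg].
  now apply is_derive_scal.
Qed.

Lemma is_derive_acos x : -1 < x < 1 -> is_derive acos x (-1 / sqrt (1 - x²)).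
Proof.
  intros Hx; rewrite <- (derive_pt_acos x Hx); apply is_derive_Reals.
  unfold derive_pt; destruct (derivable_pt_acos x Hx) as [d Hd]; exact Hd.
Qed.

Lemma sqrt_1_minus_cos2 x : 0 <= x <= PI -> sqrt (1 - cos x ^ 2) = sin x.
Proof.
  intros Hx; rewrite <- (sqrt_pow2 (sin x)) by (apply sin_ge_0; lra).
  f_equal; pose proof (sin2_cos2 x); unfold Rsqr in *; nra.
Qed.

Lemma is_derive_translate (f g : R -> R) (a l : R) :
  is_derive f 0 l -> (forall t, f (t - a) = g t) -> is_derive g a l.
Proof.
  intros Hf Hfg; apply (is_derive_ext (fun t => f (t - a))); [exact Hfg|].
  apply (is_derive_value _ _ (l * 1)); [|ring].
  apply is_derive_comp_R; [now rewrite Rminus_diag|].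
  auto_derive; [exact I|ring].
Qed.

Lemma locally_pos_of_ex_derive (u : R -> R) x :
  ex_derive u x -> 0 < u x -> locally x (fun t => 0 < u t).
Proof.
  intros Hd Hu; apply (ex_derive_continuous u x Hd).
  exact (locally_open (fun y => 0 < y) _ (open_gt 0) (fun _ H => H) _ Hu).
Qed.

Lemma sin_pow_SS x n : sin x ^ S (S n) = sin x ^ n * (1 - cos x ^ 2).
Proof.
  replace (1 - cos x ^ 2) with (sin x ^ 2) by (pose proof (sin2_cos2 x); unfold Rsqr in *; nra).
  simpl; ring.
Qed.

Inductive poly_fun : (R -> R) -> Prop :=
  | poly_const c : poly_fun (fun _ => c)
  | poly_id : poly_fun (fun x => x)
  | poly_plus f g : poly_fun f -> poly_fun g -> poly_fun (fun x => f x + g x)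
  | poly_mult f g : poly_fun f -> poly_fun g -> poly_fun (fun x => f x * g x)
  | poly_ext f g : (forall x, f x = g x) -> poly_fun f -> poly_fun g.

Lemma poly_fun_is_derive f :
  poly_fun f -> exists f', poly_fun f' /\ forall x, is_derive f x (f' x).
Proof.
  induction 1 as [c| |f g _ [f' [Pf' Df]] _ [g' [Pg' Dg]]
                 |f g Pf [f' [Pf' Df]] Pg [g' [Pg' Dg]]|f g Efg _ [f' [Pf' Df]]].
  - exists (fun _ => 0); split; [apply poly_const|].
    intros x; apply (@is_derive_const R_AbsRing R_NormedModule).
  - exists (fun _ => 1); split; [apply poly_const|].
    intros x; apply (@is_derive_id R_AbsRing).
  - exists (fun x => f' x + g' x); split; [now apply poly_plus|].
    intros x; now apply (@is_derive_plus R_AbsRing R_NormedModule).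
  - exists (fun x => f' x * g x + f x * g' x); split.
    + apply poly_plus; apply poly_mult; assumption.
    + intros x; now apply Derive.is_derive_mult.
  - exists f'; split; [exact Pf'|].
    intros x; apply (is_derive_ext f); auto.
Qed.

Lemma poly_fun_Derive_n f n :
  poly_fun f -> exists g, poly_fun g /\ forall x, Derive_n f n x = g x.
Proof.
  intros Pf; induction n as [|n [g [Pg Eg]]]; [now exists f|].
  destruct (poly_fun_is_derive g Pg) as [g' [Pg' Dg]].
  exists g'; split; [exact Pg'|].
  intros x; simpl; rewrite (Derive_ext _ _ x Eg).
  now apply is_derive_unique.
Qed.

Lemma ex_derive_Derive_n_poly f n x : poly_fun f -> ex_derive (Derive_n f n) x.
Proof.
  intros Pf; destruct (poly_fun_Derive_n f n Pf) as [g [Pg Eg]].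
  destruct (poly_fun_is_derive g Pg) as [g' [_ Dg]].
  exists (g' x); apply (is_derive_ext g); auto.
Qed.

Lemma poly_fun_pow f n : poly_fun f -> poly_fun (fun x => f x ^ n).
Proof.
  intros Pf; induction n as [|n IH]; [exact (poly_const 1)|].
  now apply poly_mult.
Qed.

Lemma poly_fun_chebT n : poly_fun (chebT n).
Proof.
  enough (poly_fun (fun t => fst (cheb_pair n t)) /\ poly_fun (fun t => snd (cheb_pair n t)))
    by easy.
  induction n as [|n [IH1 IH2]]; [split; [exact (poly_const 1)|exact poly_id]|].
  split; [exact IH2|]; simpl.
  apply (poly_ext (fun t => 2 * t * snd (cheb_pair n t) + (-1) * fst (cheb_pair n t)));
    [intros; ring|].
  apply poly_plus; repeat apply poly_mult; auto using poly_const, poly_id.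
Qed.

Definition Ynorm (k l : nat) : R := / sqrt (a_kl k l) * sqrt ((2 * INR l + 1) / (2 * PI)).

Definition Yradial (k l : nat) (c : R) : R := sin c ^ l * chebT_der (k + 1) (l + 1) (cos c).

Lemma Ysph_separated k l m p t c :
  Ysph k l m p t c = Ynorm k l * ym m p * legK l (Z.abs_nat m) (cos t) * Yradial k l c.
Proof. unfold Ysph, Ylm, Ynorm, Yradial; ring. Qed.

Lemma ex_derive_ym m p : ex_derive (ym m) p.
Proof. unfold ym; destruct (0 <? m)%Z, (m =? 0)%Z; auto_derive; auto. Qed.

Lemma ex_derive_legK l j u : -1 < u < 1 -> ex_derive (legK l j) u.
Proof.
  intros Hu; unfold legK, assocP; auto_derive; repeat split; [nra|].
  apply ex_derive_Derive_n_poly, poly_fun_pow.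
  apply (poly_ext (fun s => s * s + (-1))); [intros; simpl; ring|].
  apply poly_plus; [apply poly_mult|]; auto using poly_id, poly_const.
Qed.

Lemma ex_derive_Yradial k l c : ex_derive (Yradial k l) c.
Proof.
  unfold Yradial, chebT_der; auto_derive; repeat split.
  apply ex_derive_Derive_n_poly, poly_fun_chebT.
Qed.

Lemma cos_sin_INR_mult_eq p q n : cos p = cos q -> sin p = sin q ->
  cos (INR n * p) = cos (INR n * q) /\ sin (INR n * p) = sin (INR n * q).
Proof.
  intros Hc Hs; induction n as [|n [IHc IHs]]; [now rewrite !Rmult_0_l|].
  rewrite S_INR, !(Rmult_plus_distr_r _ 1), !Rmult_1_l.
  now rewrite cos_plus, sin_plus, cos_plus, sin_plus, IHc, IHs, Hc, Hs.
Qed.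

Lemma ym_eq_cos_sin m p q : cos p = cos q -> sin p = sin q -> ym m p = ym m q.
Proof.
  intros Hc Hs; unfold ym.
  destruct (0 <? m)%Z eqn:Hm; [|destruct (m =? 0)%Z; [reflexivity|]].
  - apply Z.ltb_lt in Hm; rewrite <- (Z2Nat.id m), <- INR_IZR_INZ by lia.
    now apply cos_sin_INR_mult_eq.
  - rewrite <- (Z2Nat.id (Z.abs m)), <- INR_IZR_INZ by lia.
    now apply cos_sin_INR_mult_eq.
Qed.

Lemma Derive_Ysph_phi k l m p t c : Derive (fun p => Ysph k l m p t c) p =
  Ynorm k l * Derive (ym m) p * legK l (Z.abs_nat m) (cos t) * Yradial k l c.
Proof.
  apply is_derive_unique.
  apply (is_derive_ext
           (fun p => Ynorm k l * ym m p * legK l (Z.abs_nat m) (cos t) * Yradial k l c));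
    [intros; symmetry; apply Ysph_separated|].
  auto_derive; [apply ex_derive_ym|].
  change (fun x => ym m x) with (ym m); ring.
Qed.

Lemma Derive_Ysph_theta k l m p t c : 0 < sin t -> Derive (fun t => Ysph k l m p t c) t =
  Ynorm k l * ym m p * (Derive (legK l (Z.abs_nat m)) (cos t) * - sin t) * Yradial k l c.
Proof.
  intros Ht; apply is_derive_unique.
  apply (is_derive_ext
           (fun t => Ynorm k l * ym m p * legK l (Z.abs_nat m) (cos t) * Yradial k l c));
    [intros; symmetry; apply Ysph_separated|].
  assert (Hcos : -1 < cos t < 1) by (pose proof (sin2_cos2 t); unfold Rsqr in *; nra).
  auto_derive; [now apply ex_derive_legK|].
  change (fun x => legK l (Z.abs_nat m) x) with (legK l (Z.abs_nat m)); ring.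
Qed.

Lemma Derive_Ysph_chi k l m p t c : Derive (fun c => Ysph k l m p t c) c =
  Ynorm k l * ym m p * legK l (Z.abs_nat m) (cos t) * Derive (Yradial k l) c.
Proof.
  apply is_derive_unique.
  apply (is_derive_ext
           (fun c => Ynorm k l * ym m p * legK l (Z.abs_nat m) (cos t) * Yradial k l c));
    [intros; symmetry; apply Ysph_separated|].
  auto_derive; [apply ex_derive_Yradial|].
  change (fun x => Yradial k l x) with (Yradial k l); ring.
Qed.

Lemma polar_angle_exists a b : a ^ 2 + b ^ 2 = 1 ->
  exists p, 0 <= p < 2 * PI /\ cos p = a /\ sin p = b.
Proof.
  intros Hab; assert (Ha : -1 <= a <= 1) by nra.
  pose proof PI_RGT_0; pose proof (acos_bound a).
  assert (Hsin : sin (acos a) = Rabs b).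
  { rewrite sin_acos, <- sqrt_Rsqr_abs by exact Ha; f_equal; unfold Rsqr; nra. }
  destruct (Rle_or_lt 0 b) as [Hb|Hb].
  - exists (acos a); rewrite cos_acos, Hsin, Rabs_pos_eq by assumption; split; [lra|auto].
  - assert (0 < acos a).
    { destruct (proj1 (acos_bound a)) as [|Hz]; [assumption|].
      assert (a = 1) by (rewrite <- (cos_acos a Ha), <- Hz; apply cos_0).
      subst; nra. }
    exists (2 * PI - acos a); split; [lra|].
    rewrite cos_minus, sin_minus, cos_2PI, sin_2PI, cos_acos, Hsin, Rabs_left by assumption.
    split; ring.
Qed.

Lemma sin_acos_pos d : -1 < d < 1 -> 0 < sin (acos d) /\ sin (acos d) ^ 2 = 1 - d ^ 2.
Proof.
  intros Hd; rewrite sin_acos by lra; split.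
  - apply sqrt_lt_R0; unfold Rsqr; nra.
  - rewrite pow2_sqrt; unfold Rsqr; nra.
Qed.

Lemma sph_coords_exist a b c d : a ^ 2 + b ^ 2 + c ^ 2 + d ^ 2 = 1 -> 0 < a ^ 2 + b ^ 2 ->
  exists p t x, is_sph_coords (a, b, c, d) p t x.
Proof.
  intros Hsph Hab.
  assert (Hd : -1 < d < 1) by nra.
  destruct (sin_acos_pos d Hd) as [Hsx Hsx2].
  set (x := acos d) in *; set (c' := c / sin x).
  assert (Hc' : -1 < c' < 1).
  { assert (c' ^ 2 < 1); [|nra].
    unfold c', Rdiv; rewrite Rpow_mult_distr, pow_inv, Hsx2.
    apply (Rmult_lt_reg_r (1 - d ^ 2)); [nra|]. field_simplify; nra. }
  destruct (sin_acos_pos c' Hc') as [Hst Hst2].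
  set (t := acos c') in *.
  assert (Hr2 : (sin t * sin x) ^ 2 = a ^ 2 + b ^ 2).
  { rewrite Rpow_mult_distr, Hst2, Hsx2; unfold c', Rdiv; rewrite Rpow_mult_distr, pow_inv, Hsx2.
    field_simplify; [lra|nra]. }
  assert (Hr : 0 < sin t * sin x) by nra.
  destruct (polar_angle_exists (a / (sin t * sin x)) (b / (sin t * sin x))) as [p [Hp [Hcp Hsp]]].
  { unfold Rdiv; rewrite !Rpow_mult_distr, pow_inv, Hr2; field; lra. }
  exists p, t, x; split.
  - pose proof (acos_bound c'); pose proof (acos_bound d); unfold sph_range, t, x; lra.
  - unfold sph; rewrite Hcp, Hsp; unfold t, x; rewrite !cos_acos by lra; fold x.
    fold t; unfold c'; repeat f_equal; field; lra.
Qed.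

Lemma sph_coords_unique a b c d p t x : 0 <= t <= PI -> 0 <= x <= PI ->
  sph p t x = (a, b, c, d) -> 0 < a ^ 2 + b ^ 2 ->
  x = acos d /\ cos t = c / sqrt (1 - d ^ 2) /\
  cos p = a / sqrt (a ^ 2 + b ^ 2) /\ sin p = b / sqrt (a ^ 2 + b ^ 2).
Proof.
  intros Ht Hx Hsph Hab; injection Hsph as Ha Hb Hc Hd; subst a b c d.
  pose proof (sin_ge_0 t (proj1 Ht) (proj2 Ht)); pose proof (sin_ge_0 x (proj1 Hx) (proj2 Hx)).
  pose proof (sin2_cos2 p) as Hp; unfold Rsqr in Hp.
  assert (Hr2 : (sin t * cos p * sin x) ^ 2 + (sin t * sin p * sin x) ^ 2 = (sin t * sin x) ^ 2).
  { transitivity ((sin t * sin x) ^ 2 * (sin p * sin p + cos p * cos p)); [ring|rewrite Hp; ring]. }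
  rewrite Hr2 in Hab |- *.
  assert (0 < sin t * sin x).
  { destruct (Rle_lt_or_eq_dec 0 (sin t * sin x)) as [|E]; [now apply Rmult_le_pos|assumption|].
    rewrite <- E in Hab; lra. }
  rewrite sqrt_pow2 by lra.
  rewrite sqrt_1_minus_cos2, acos_cos by assumption.
  repeat split; field; nra.
Qed.

Lemma Yfun_sph_eq k l m a b c d q :
  a ^ 2 + b ^ 2 + c ^ 2 + d ^ 2 = 1 -> 0 < a ^ 2 + b ^ 2 ->
  cos q = a / sqrt (a ^ 2 + b ^ 2) -> sin q = b / sqrt (a ^ 2 + b ^ 2) ->
  Yfun k l m (a, b, c, d) =
  Ynorm k l * ym m q * legK l (Z.abs_nat m) (c / sqrt (1 - d ^ 2)) * Yradial k l (acos d).
Proof.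
  intros Hsph Hab Hcq Hsq; unfold Yfun, sph_coords.
  match goal with |- context [epsilon ?i ?P] =>
    assert (HP : P (epsilon i P)) by
      (apply epsilon_spec; destruct (sph_coords_exist a b c d Hsph Hab) as [p [t [x Hx]]];
       now exists (p, t, x));
    destruct (epsilon i P) as [[p t] x] end.
  destruct HP as [[_ [Ht Hx]] HP].
  destruct (sph_coords_unique a b c d p t x Ht Hx HP Hab) as [-> [<- [Hcp Hsp]]].
  rewrite Ysph_separated, (ym_eq_cos_sin m p q); congruence.
Qed.

Lemma sph_range_interior p t x : sph_range p t x ->
  0 < (sin t * cos p * sin x) ^ 2 + (sin t * sin p * sin x) ^ 2 -> 0 < t < PI /\ 0 < x < PI.
Proof.
  intros [_ [Ht Hx]] Hpos.
  assert (sin t <> 0) by (intros E; rewrite E in Hpos; lra).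
  assert (sin x <> 0) by (intros E; rewrite E in Hpos; lra).
  destruct Ht as [[Ht0|Ht0] [HtPI|HtPI]], Hx as [[Hx0|Hx0] [HxPI|HxPI]]; subst;
    rewrite ?sin_0, ?sin_PI in *; split; lra.
Qed.

(* Rotated by [-phi], the point [(a, b)] lies in the right half-plane, where [atan] gives its
   argument. *)
Definition arg_near (phi a b : R) : R :=
  phi + atan ((- sin phi * a + cos phi * b) / (cos phi * a + sin phi * b)).

Lemma cos_sin_arg_near phi a b : 0 < cos phi * a + sin phi * b ->
  cos (arg_near phi a b) = a / sqrt (a ^ 2 + b ^ 2) /\
  sin (arg_near phi a b) = b / sqrt (a ^ 2 + b ^ 2).
Proof.
  intros Hu; unfold arg_near.
  set (u := cos phi * a + sin phi * b) in *; set (v := - sin phi * a + cos phi * b).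
  pose proof (sin2_cos2 phi) as Hphi; unfold Rsqr in Hphi.
  assert (Huv : u ^ 2 + v ^ 2 = a ^ 2 + b ^ 2).
  { transitivity ((a ^ 2 + b ^ 2) * (sin phi * sin phi + cos phi * cos phi)); [unfold u, v; ring|].
    rewrite Hphi; ring. }
  assert (Hr : sqrt (1 + (v / u)²) = sqrt (a ^ 2 + b ^ 2) / u).
  { rewrite <- (sqrt_pow2 (sqrt (a ^ 2 + b ^ 2) / u)) by
      (apply Rlt_le, Rdiv_lt_0_compat; [apply sqrt_lt_R0; nra|assumption]).
    f_equal; unfold Rdiv; rewrite Rpow_mult_distr, pow2_sqrt, pow_inv, <- Huv by nra.
    unfold Rsqr; field; lra. }
  assert (0 < sqrt (a ^ 2 + b ^ 2)) by (apply sqrt_lt_R0; nra).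
  rewrite cos_plus, sin_plus, cos_atan, sin_atan, Hr.
  split; unfold u, v in *; field_simplify_eq; try (split; lra); nra.
Qed.

Definition Ychart (k l : nat) (m : Z) (phi a b c d : R) : R :=
  Ynorm k l * ym m (arg_near phi a b) * legK l (Z.abs_nat m) (c / sqrt (1 - d ^ 2))
  * Yradial k l (acos d).

Lemma Yfun_chart k l m phi a b c d :
  a ^ 2 + b ^ 2 + c ^ 2 + d ^ 2 = 1 -> 0 < cos phi * a + sin phi * b ->
  Yfun k l m (a, b, c, d) = Ychart k l m phi a b c d.
Proof.
  intros Hsph Hu; destruct (cos_sin_arg_near phi a b Hu) as [Hc Hs].
  apply Yfun_sph_eq; [assumption| |assumption|assumption].
  pose proof (sin2_cos2 phi) as Hphi; unfold Rsqr in Hphi.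
  assert ((cos phi * a + sin phi * b) ^ 2 + (- sin phi * a + cos phi * b) ^ 2 = a ^ 2 + b ^ 2)
    by (transitivity ((a ^ 2 + b ^ 2) * (sin phi * sin phi + cos phi * cos phi));
        [ring|rewrite Hphi; ring]).
  pose proof (pow_lt _ 2 Hu); pose proof (pow2_ge_0 (- sin phi * a + cos phi * b)); lra.
Qed.

Section SphericalChainRule.

Variables (phi theta chi : R) (X1 X2 X3 X4 : R -> R) (v1 v2 v3 v4 : R).
Hypotheses (Htheta : 0 < theta < PI) (Hchi : 0 < chi < PI).
Hypotheses (HX1 : X1 0 = sin theta * cos phi * sin chi) (HX2 : X2 0 = sin theta * sin phi * sin chi)
  (HX3 : X3 0 = cos theta * sin chi) (HX4 : X4 0 = cos chi).
Hypotheses (dX1 : is_derive X1 0 v1) (dX2 : is_derive X2 0 v2)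
  (dX3 : is_derive X3 0 v3) (dX4 : is_derive X4 0 v4).

Let sin_theta_pos : 0 < sin theta := sin_gt_0 theta (proj1 Htheta) (proj2 Htheta).
Let sin_chi_pos : 0 < sin chi := sin_gt_0 chi (proj1 Hchi) (proj2 Hchi).

Lemma arg_near_at_0 : arg_near phi (X1 0) (X2 0) = phi.
Proof.
  unfold arg_near; rewrite HX1, HX2.
  replace (- sin phi * (sin theta * cos phi * sin chi) + cos phi * (sin theta * sin phi * sin chi))
    with 0 by ring.
  unfold Rdiv; rewrite Rmult_0_l, atan_0; ring.
Qed.

Lemma cos_theta_at_0 : X3 0 / sqrt (1 - X4 0 ^ 2) = cos theta.
Proof. rewrite HX3, HX4, sqrt_1_minus_cos2 by lra; field; lra. Qed.

Lemma radial_projection_at_0 : cos phi * X1 0 + sin phi * X2 0 = sin theta * sin chi.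
Proof.
  pose proof (sin2_cos2 phi) as Hphi; unfold Rsqr in Hphi; rewrite HX1, HX2.
  transitivity (sin theta * sin chi * (sin phi * sin phi + cos phi * cos phi)); [ring|].
  rewrite Hphi; ring.
Qed.

Lemma Ychart_at_0 k l m : Ychart k l m phi (X1 0) (X2 0) (X3 0) (X4 0) = Ysph k l m phi theta chi.
Proof.
  unfold Ychart; rewrite arg_near_at_0, cos_theta_at_0, HX4, acos_cos by lra.
  symmetry; apply Ysph_separated.
Qed.

Lemma is_derive_arg_near_curve : is_derive (fun t => arg_near phi (X1 t) (X2 t)) 0
  ((- sin phi * v1 + cos phi * v2) / (sin theta * sin chi)).
Proof.
  pose proof radial_projection_at_0 as HU.
  assert (HV : - sin phi * X1 0 + cos phi * X2 0 = 0) by (rewrite HX1, HX2; ring).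
  unfold arg_near; auto_derive.
  - repeat split; try (eexists; eassumption). rewrite HU; nra.
  - change (Derive (fun t => X1 t) 0) with (Derive X1 0).
    change (Derive (fun t => X2 t) 0) with (Derive X2 0).
    rewrite (is_derive_unique _ _ _ dX1), (is_derive_unique _ _ _ dX2), HU, HV.
    field; nra.
Qed.

Lemma is_derive_cos_theta_curve : is_derive (fun t => X3 t / sqrt (1 - X4 t ^ 2)) 0
  ((v3 * sin chi + cos theta * cos chi * v4) / sin chi ^ 2).
Proof.
  assert (Hs : sqrt (1 + - (X4 0 * (X4 0 * 1))) = sin chi).
  { rewrite <- sqrt_1_minus_cos2, <- HX4 by lra; f_equal; ring. }
  pose proof (sin2_cos2 chi); unfold Rsqr in *.
  auto_derive.
  - repeat split; try (eexists; eassumption); rewrite ?Hs, ?HX4; nra.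
  - change (Derive (fun t => X3 t) 0) with (Derive X3 0).
    change (Derive (fun t => X4 t) 0) with (Derive X4 0).
    rewrite (is_derive_unique _ _ _ dX3), (is_derive_unique _ _ _ dX4), Hs, HX3, HX4.
    field_simplify_eq; [|lra].
    replace (sin chi ^ 3) with (sin chi * (1 - cos chi ^ 2)) by nra; ring.
Qed.

Lemma is_derive_chi_curve : is_derive (fun t => acos (X4 t)) 0 (- v4 / sin chi).
Proof.
  pose proof (sin2_cos2 chi); unfold Rsqr in *.
  apply (is_derive_value _ _ (-1 / sqrt (1 - (X4 0)²) * v4)).
  - apply is_derive_comp_R; [|exact dX4].
    apply is_derive_acos; rewrite HX4; split; nra.
  - unfold Rsqr; rewrite HX4, <- (sqrt_1_minus_cos2 chi) by lra.
    replace (cos chi * cos chi) with (cos chi ^ 2) by ring; field.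
    rewrite sqrt_1_minus_cos2; lra.
Qed.

Lemma is_derive_Ychart_curve k l m :
  is_derive (fun t => Ychart k l m phi (X1 t) (X2 t) (X3 t) (X4 t)) 0
    (Derive (fun p => Ysph k l m p theta chi) phi
       * ((- sin phi * v1 + cos phi * v2) / (sin theta * sin chi))
     - Derive (fun t => Ysph k l m phi t chi) theta
       * ((v3 * sin chi + cos theta * cos chi * v4) / (sin theta * sin chi ^ 2))
     - Derive (fun c => Ysph k l m phi theta c) chi * (v4 / sin chi)).
Proof.
  assert (Hym : is_derive (ym m) (arg_near phi (X1 0) (X2 0)) (Derive (ym m) phi)).
  { rewrite arg_near_at_0; apply Derive_correct, ex_derive_ym. }
  assert (HlegK : is_derive (legK l (Z.abs_nat m)) (X3 0 / sqrt (1 - X4 0 ^ 2))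
                    (Derive (legK l (Z.abs_nat m)) (cos theta))).
  { rewrite cos_theta_at_0; apply Derive_correct, ex_derive_legK.
    pose proof (sin2_cos2 theta); unfold Rsqr in *; split; nra. }
  assert (Hrad : is_derive (Yradial k l) (acos (X4 0)) (Derive (Yradial k l) chi)).
  { rewrite HX4, acos_cos by lra; apply Derive_correct, ex_derive_Yradial. }
  eapply is_derive_value.
  { exact (is_derive_scal_mult3 _ _ _ (Ynorm k l) 0 _ _ _
             (is_derive_comp_R _ (fun t => arg_near phi (X1 t) (X2 t)) _ _ _
                Hym is_derive_arg_near_curve)
             (is_derive_comp_R _ (fun t => X3 t / sqrt (1 - X4 t ^ 2)) _ _ _
                HlegK is_derive_cos_theta_curve)
             (is_derive_comp_R _ (fun t => acos (X4 t)) _ _ _ Hrad is_derive_chi_curve)). }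
  cbv beta; rewrite arg_near_at_0, cos_theta_at_0, HX4, acos_cos by lra.
  rewrite Derive_Ysph_phi, Derive_Ysph_theta, Derive_Ysph_chi by lra.
  field; lra.
Qed.

End SphericalChainRule.

Lemma Vvec_dot_stereo_velocity k l m phi theta chi e1 e2 e3 s v1 v2 v3 v4 :
  0 < sin theta -> 0 < sin chi ->
  s = sin theta * cos phi * sin chi * e1 + sin theta * sin phi * sin chi * e2
      + cos theta * sin chi * e3 ->
  v1 = (1 - cos chi) * e1 - sin theta * cos phi * sin chi * s ->
  v2 = (1 - cos chi) * e2 - sin theta * sin phi * sin chi * s ->
  v3 = (1 - cos chi) * e3 - cos theta * sin chi * s ->
  v4 = (1 - cos chi) * s ->
  Derive (fun p => Ysph k l m p theta chi) phi
    * ((- sin phi * v1 + cos phi * v2) / (sin theta * sin chi))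
  - Derive (fun t => Ysph k l m phi t chi) theta
    * ((v3 * sin chi + cos theta * cos chi * v4) / (sin theta * sin chi ^ 2))
  - Derive (fun c => Ysph k l m phi theta c) chi * (v4 / sin chi)
  = let '(V1, V2, V3) := Vvec k l m phi theta chi in V1 * e1 + V2 * e2 + V3 * e3.
Proof.
  intros Htheta Hchi -> -> -> -> ->; unfold Vvec.
  field_simplify_eq; [|lra].
  repeat rewrite sin_pow_SS; ring.
Qed.

Section StereographicLine.

Variables (x1 x2 x3 e1 e2 e3 : R).

Let n (t : R) : R := (x1 + e1 * t) ^ 2 + (x2 + e2 * t) ^ 2 + (x3 + e3 * t) ^ 2.
Let X (y f t : R) : R := 2 * (y + f * t) / (n t + 1).
Let X4 (t : R) : R := (n t - 1) / (n t + 1).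
Let S : R := X x1 e1 0 * e1 + X x2 e2 0 * e2 + X x3 e3 0 * e3.

Let n_nonneg t : 0 <= n t.
Proof.
  pose proof (pow2_ge_0 (x1 + e1 * t)); pose proof (pow2_ge_0 (x2 + e2 * t));
    pose proof (pow2_ge_0 (x3 + e3 * t)); unfold n; lra.
Qed.

Lemma inv_stereo_line t :
  inv_stereo (x1 + e1 * t) (x2 + e2 * t) (x3 + e3 * t) = (X x1 e1 t, X x2 e2 t, X x3 e3 t, X4 t).
Proof. reflexivity. Qed.

Lemma is_derive_sqnorm_line : is_derive n 0 (2 * (x1 * e1 + x2 * e2 + x3 * e3)).
Proof. unfold n; auto_derive; [exact I|ring]. Qed.

Lemma is_derive_stereo_coord y f : is_derive (X y f) 0 ((1 - X4 0) * f - X y f 0 * S).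
Proof.
  pose proof (n_nonneg 0); unfold S, X4, X.
  auto_derive; [repeat split; (eexists; apply is_derive_sqnorm_line) || lra|].
  change (Derive (fun t => n t) 0) with (Derive n 0).
  rewrite (is_derive_unique _ _ _ is_derive_sqnorm_line); field; lra.
Qed.

Lemma is_derive_stereo_height : is_derive X4 0 ((1 - X4 0) * S).
Proof.
  pose proof (n_nonneg 0); unfold S, X4, X.
  auto_derive; [repeat split; (eexists; apply is_derive_sqnorm_line) || lra|].
  change (Derive (fun t => n t) 0) with (Derive n 0).
  rewrite (is_derive_unique _ _ _ is_derive_sqnorm_line); field; lra.
Qed.

Lemma inv_stereo_at_0 : inv_stereo x1 x2 x3 = (X x1 e1 0, X x2 e2 0, X x3 e3 0, X4 0).
Proof. unfold X, X4, n; rewrite !Rmult_0_r, !Rplus_0_r; reflexivity. Qed.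

Lemma inv_stereo_line_on_sphere t : X x1 e1 t ^ 2 + X x2 e2 t ^ 2 + X x3 e3 t ^ 2 + X4 t ^ 2 = 1.
Proof. pose proof (n_nonneg t); unfold X, X4; field_simplify_eq; [unfold n; ring|lra]. Qed.

Lemma inv_stereo_horizontal_pos : x1 ^ 2 + x2 ^ 2 <> 0 -> 0 < X x1 e1 0 ^ 2 + X x2 e2 0 ^ 2.
Proof.
  intros Hx; pose proof (n_nonneg 0); unfold X; rewrite !Rmult_0_r, !Rplus_0_r.
  replace ((2 * x1 / (n 0 + 1)) ^ 2 + (2 * x2 / (n 0 + 1)) ^ 2)
    with (4 * (x1 ^ 2 + x2 ^ 2) / (n 0 + 1) ^ 2) by (field; lra).
  apply Rdiv_lt_0_compat; [|apply pow_lt; lra].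
  pose proof (pow2_ge_0 x1); pose proof (pow2_ge_0 x2); lra.
Qed.

Lemma is_derive_conformal_factor :
  is_derive (fun t => sqrt (1 - X4 t)) 0 (- / 2 * S * sqrt (1 - X4 0)).
Proof.
  assert (Hpos : 0 < 1 - X4 0).
  { pose proof (n_nonneg 0); unfold X4.
    replace (1 - (n 0 - 1) / (n 0 + 1)) with (2 / (n 0 + 1)) by (field; lra).
    apply Rdiv_lt_0_compat; lra. }
  pose proof (sqrt_lt_R0 _ Hpos); pose proof (sqrt_sqrt _ (Rlt_le _ _ Hpos)) as Hsq.
  apply (is_derive_value _ _ ((- ((1 - X4 0) * S)) / (2 * sqrt (1 - X4 0)))).
  - apply (is_derive_sqrt (fun t => 1 - X4 t)); [|exact Hpos].
    apply (is_derive_value _ _ (0 - (1 - X4 0) * S)); [|ring].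
    apply (is_derive_minus (fun _ => 1) X4);
      [apply (@is_derive_const R_AbsRing R_NormedModule)|apply is_derive_stereo_height].
  - set (q := sqrt (1 - X4 0)) in *; rewrite <- Hsq; field; lra.
Qed.

Lemma Wfun_line_chart k l m phi : 0 < cos phi * X x1 e1 0 + sin phi * X x2 e2 0 ->
  locally 0 (fun t =>
    sqrt (1 - X4 t) * Ychart k l m phi (X x1 e1 t) (X x2 e2 t) (X x3 e3 t) (X4 t)
    = Wfun k l m (x1 + e1 * t) (x2 + e2 * t) (x3 + e3 * t)).
Proof.
  intros Hu; eapply filter_imp;
    [|apply (locally_pos_of_ex_derive (fun t => cos phi * X x1 e1 t + sin phi * X x2 e2 t))].
  - intros t Ht; unfold Wfun; rewrite inv_stereo_line, <- Yfun_chart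
      by (exact (inv_stereo_line_on_sphere t) || exact Ht).
    f_equal; change (sqrt (1 - X4 t) = sqrt (2 / (n t + 1))).
    pose proof (n_nonneg t); unfold X4; f_equal; field; lra.
  - auto_derive; repeat split; eexists; apply is_derive_stereo_coord.
  - exact Hu.
Qed.

Lemma is_derive_Wfun_line k l m phi theta chi :
  x1 ^ 2 + x2 ^ 2 <> 0 -> is_sph_coords (inv_stereo x1 x2 x3) phi theta chi ->
  let '(xi1, xi2, xi3, xi4) := inv_stereo x1 x2 x3 in
  let '(V1, V2, V3) := Vvec k l m phi theta chi in
  is_derive (fun t => Wfun k l m (x1 + e1 * t) (x2 + e2 * t) (x3 + e3 * t)) 0
    (sqrt (1 - xi4) * (V1 * e1 + V2 * e2 + V3 * e3
                       - / 2 * Ysph k l m phi theta chi * (xi1 * e1 + xi2 * e2 + xi3 * e3))).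
Proof.
  intros Hx [Hrange Hsph].
  destruct (Vvec k l m phi theta chi) as [[V1 V2] V3] eqn:HV.
  rewrite inv_stereo_at_0 in Hsph |- *.
  pose proof (inv_stereo_horizontal_pos Hx) as Hhor.
  injection Hsph as HX1 HX2 HX3 HX4; symmetry in HX1, HX2, HX3, HX4.
  rewrite HX1, HX2 in Hhor.
  destruct (sph_range_interior phi theta chi Hrange Hhor) as [Htheta Hchi].
  pose proof (is_derive_Ychart_curve phi theta chi (X x1 e1) (X x2 e2) (X x3 e3) X4 _ _ _ _
    Htheta Hchi HX1 HX2 HX3 HX4 (is_derive_stereo_coord x1 e1) (is_derive_stereo_coord x2 e2)
    (is_derive_stereo_coord x3 e3) is_derive_stereo_height k l m) as HY.
  eapply is_derive_ext_loc.
  - apply (Wfun_line_chart k l m phi).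
    rewrite (radial_projection_at_0 phi theta chi (X x1 e1) (X x2 e2) HX1 HX2).
    apply Rmult_lt_0_compat; apply sin_gt_0; lra.
  - eapply is_derive_value;
      [exact (Derive.is_derive_mult _ _ 0 _ _ is_derive_conformal_factor HY)|].
    cbv beta.
    rewrite (Ychart_at_0 phi theta chi (X x1 e1) (X x2 e2) (X x3 e3) X4 Hchi HX1 HX2 HX3 HX4).
    rewrite (Vvec_dot_stereo_velocity k l m phi theta chi e1 e2 e3 S).
    + rewrite HV; unfold S; ring.
    + apply sin_gt_0; lra.
    + apply sin_gt_0; lra.
    + unfold S; rewrite HX1, HX2, HX3; ring.
    + rewrite HX4, HX1; reflexivity.
    + rewrite HX4, HX2; reflexivity.
    + rewrite HX4, HX3; reflexivity.
    + rewrite HX4; reflexivity.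
Qed.

End StereographicLine.

Theorem proposition5p1 (k l : nat) (m : Z) (x1 x2 x3 : R)
  (phi theta chi : R) :
  (l <= k)%nat -> (- Z.of_nat l <= m <= Z.of_nat l)%Z ->
  x1 ^ 2 + x2 ^ 2 <> 0 ->
  is_sph_coords (inv_stereo x1 x2 x3) phi theta chi ->
  let '(xi1, xi2, xi3, xi4) := inv_stereo x1 x2 x3 in
  let '(V1, V2, V3) := Vvec k l m phi theta chi in
  let Y := Ysph k l m phi theta chi in
  let c := sqrt (1 - xi4) in
  is_derive (fun t => Wfun k l m t x2 x3) x1 (c * (V1 - / 2 * Y * xi1)) /\
  is_derive (fun t => Wfun k l m x1 t x3) x2 (c * (V2 - / 2 * Y * xi2)) /\
  is_derive (fun t => Wfun k l m x1 x2 t) x3 (c * (V3 - / 2 * Y * xi3)).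
Proof.
  (* The constraints on (k, l, m) only single out the eigenfunctions; the formula holds for
     all indices. *)
  intros _ _ Hx Hs.
  pose proof (fun e1 e2 e3 => is_derive_Wfun_line x1 x2 x3 e1 e2 e3 k l m phi theta chi Hx Hs)
    as HW; revert HW.
  destruct (inv_stereo x1 x2 x3) as [[[xi1 xi2] xi3] xi4],
    (Vvec k l m phi theta chi) as [[V1 V2] V3].
  intros HW; cbv beta iota zeta.
  split; [|split]; eapply is_derive_translate.
  - apply (is_derive_value _ _ _ _ (HW 1 0 0)); ring.
  - intros t; cbv beta; f_equal; ring.
  - apply (is_derive_value _ _ _ _ (HW 0 1 0)); ring.
  - intros t; cbv beta; f_equal; ring.
  - apply (is_derive_value _ _ _ _ (HW 0 0 1)); ring.
  - intros t; cbv beta; f_equal; ring.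
Qed.
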